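(* Let $d,N\in\mathbb{N}$, $0<\lambda<1$ and $\epsilon\ge 0$. Let $\bm G:=\frac1N \bm Z\bm M\bm Z^\top\in\mathbb{R}^{(d+1)\times(d+1)}$; this matrix does not depend on $\bm\Delta$. For $i,j\in[d+1]$ and $k\in[d]$ put $$h_{i,j,k}:=\mathbb{E}_{c\sim U([d]),\,\{(\bm x_n,y_n)\}_{n=1}^{N+1}\overset{\text{i.i.d.}}{\sim}\mathcal{D}^{\rm tr}_c}\big[G_{i,j}\,(y_{N+1}x_{N+1,k}-\epsilon)\big].$$ Then the minimum value of the adversarial pretraining problem $$\min_{\bm P,\bm Q\in[0,1]^{(d+1)\times(d+1)}}\ \mathbb{E}_{c\sim U([d]),\,\{(\bm x_n,y_n)\}_{n=1}^{N+1}\overset{\text{i.i.d.}}{\sim}\mathcal{D}^{\rm tr}_c}\Big[\max_{\|\bm\Delta\|_\infty\le\epsilon}-y_{N+1}[f(\bm Z;\bm P,\bm Q)]_{d+1,N+1}\Big]$$ equals $$-\max_{\bm b\in\{0,1\}^{d+1}}\ \sum_{j=1}^{d+1}\sum_{k=1}^{d}\max\Big(0,\ \sum_{i=1}^{d+1} b_i\,h_{i,j,k}\Big).$$ Moreover, if $\bm b^\star\in\{0,1\}^{d+1}$ attains this maximum, then a global minimizer of the pretraining problem is given by $\bm P=\begin{bmatrix}\bm 0_{d,d+1}\\ (\bm b^\star)^\top\end{bmatrix}$ and $\bm Q=\begin{bmatrix}\bm A & \bm 0_{d+1}\end{bmatrix}$, where $\bm A\in\{0,1\}^{(d+1)\times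 d}$ is defined by $A_{j,k}=1$ if $\sum_{i=1}^{d+1} b^\star_i h_{i,j,k}\ge 0$ and $A_{j,k}=0$ otherwise.
   Context: For $n\in\mathbb{N}$, $[n]:=\{1,\dots,n\}$. $U(\mathcal S)$ is the uniform distribution on a set $\mathcal S$. $\bm 1_{a}$, $\bm 1_{a,b}$, $\bm 0_a$, $\bm 0_{a,b}$, $\bm I_a$ denote the all-ones vector/matrix, the all-zeros vector/matrix and the identity. Training distributions: for $c\in[d]$ and $0<\lambda<1$, a sample $(\bm x,y)\sim\mathcal{D}^{\rm tr}_c$ with $\bm x\in\mathbb{R}^d$ is generated as follows: $y\sim U(\{\pm1\})$, $x_c=y$, and for each $i\ne c$, $x_i\sim U([0,\lambda])$ if $y=1$ and $x_i\sim U([-\lambda,0])$ if $y=-1$; given $y$, the coordinates $x_i$ are mutually independent. Transformer: given demonstrations $(\bm x_1,y_1),\dots,(\bm x_N,y_N)$, a query $\bm x_{N+1}\in\mathbb{R}^d$ and a perturbation $\bm\Delta\in\mathbb{R}^d$, let $\bm Z\in\mathbb{R}^{(d+1)\times(N+1)}$ be the matrix whose $n$-th column is $(\bm x_n^\top, y_n)^\top$ for $n\le N$ and whose last column is $((\bm x_{N+1}+\bm\Delta)^\top,0)^\top$. Let $\bm M:=\begin{bmatrix}\bm I_N&0\\0&0\end{bmatrix}\in\mathbb{R}^{(N+1)\times(N+1)}$ and, for $\bm P,\bm Q\in\mathbb{R}^{(d+1)\times(d+1)}$, $f(\bm Z;\bm P,\bm Q):=\frac1N\bm P\bm Z\bm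 M\bm Z^\top\bm Q\bm Z$. $[\cdot]_{d+1,N+1}$ denotes the $(d+1,N+1)$ entry. *)

From HB Require Import structures.
From mathcomp Require Import all_boot all_order all_algebra.
From mathcomp Require Import all_classical all_reals all_analysis.
Set Implicit Arguments. Unset Strict Implicit. Unset Printing Implicit Defensive.
Import Order.TTheory GRing.Theory Num.Theory.
Local Open Scope classical_set_scope.
Local Open Scope ring_scope.

Section Defs.
Context {R : realType}.

Fixpoint iint (I : eqType) (J : I -> (R -> \bar R) -> \bar R) (s : seq I)
  (F : (I -> R) -> \bar R) : \bar R :=
  match s with
  | [::] => F (fun _ => 0)
  | i :: s' => J i (fun t => iint J s' (fun g => F (fun j => if j == i then t else g j)))
  end.

(* label encoded by a boolean: true <-> y = 1, false <-> y = -1 *)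
Definition sgn (b : bool) : R := if b then 1 else -1.

(* One-dimensional expectation for coordinate i of a sample with label y,
   under D^tr_c : x_c = y (Dirac), x_i ~ U([0,lam]) if y = 1,
   x_i ~ U([-lam,0]) if y = -1 (i <> c). *)
Definition coord_exp (lam : R) (d : nat) (c i : 'I_d) (y : bool)
  (g : R -> \bar R) : \bar R :=
  if i == c then g (sgn y)
  else ((lam^-1)%:E *
        \int[@lebesgue_measure R]_(t in (if y then [set t : R | (0 <= t <= lam)%R]
                                          else [set t : R | (- lam <= t <= 0)%R]))
          g t)%E.

(* Expectation over c ~ U([d]) and (x_n, y_n), n = 1..N+1, i.i.d. ~ D^tr_c.
   Sample n (0-based, in 'I_(N.+1); the last one, ord_max, is the query) has
   features X n : row of X and label Y n.  The labels are uniform in {+-1}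
   (each of the 2^(N+1) sign patterns has probability 2^-(N+1)); given the
   labels, all coordinates are independent. *)
Definition Exp (lam : R) (d N : nat)
  (F : ('I_N.+1 -> R) -> 'M[R]_(N.+1, d) -> \bar R) : \bar R :=
  (\sum_(c < d) ((d%:R)^-1)%:E *
     \sum_(y : {ffun 'I_N.+1 -> bool})
        ((2%:R ^- N.+1)%:E *
         iint (fun p : 'I_N.+1 * 'I_d => coord_exp lam c p.2 (y p.1))
              (enum {: 'I_N.+1 * 'I_d})
              (fun g => F (fun n => sgn (y n)) (\matrix_(n, k) g (n, k)))))%E.

Definition Mmask (N : nat) : 'M[R]_(N.+1) :=
  \matrix_(i, j) ((i == j) && (i != ord_max))%:R.

(* The prompt matrix Z in R^{(d+1) x (N+1)}: column n < N is (x_n; y_n),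
   the last column is (x_{N+1} + Delta; 0). *)
Definition Zmat (d N : nat) (Y : 'I_N.+1 -> R) (X : 'M[R]_(N.+1, d))
  (Delta : 'cV[R]_d) : 'M[R]_(d.+1, N.+1) :=
  \matrix_(i, n)
    match unlift ord_max i with
    | Some k => X n k + (if n == ord_max then Delta k 0 else 0)
    | None => if n == ord_max then 0 else Y n
    end.

Definition fTF (d N : nat) (P Q : 'M[R]_(d.+1)) (Z : 'M[R]_(d.+1, N.+1)) :
  'M[R]_(d.+1, N.+1) :=
  (N%:R)^-1 *: (P *m Z *m Mmask N *m Z^T *m Q *m Z).

(* G = (1/N) Z M Z^T (independent of Delta; computed with Delta = 0) *)
Definition Gmat (d N : nat) (Y : 'I_N.+1 -> R) (X : 'M[R]_(N.+1, d)) :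
  'M[R]_(d.+1) :=
  (N%:R)^-1 *: (Zmat Y X 0 *m Mmask N *m (Zmat Y X 0)^T).

Definition hcoef (lam eps : R) (d N : nat) (i j : 'I_d.+1) (k : 'I_d) : R :=
  fine (Exp lam (fun (Y : 'I_N.+1 -> R) (X : 'M[R]_(N.+1, d)) =>
          ((Gmat Y X) i j * (Y ord_max * X ord_max k - eps))%:E)).

Definition adv_loss (eps : R) (d N : nat) (P Q : 'M[R]_(d.+1))
  (Y : 'I_N.+1 -> R) (X : 'M[R]_(N.+1, d)) : \bar R :=
  ereal_sup [set (- Y ord_max * fTF P Q (Zmat Y X Delta) ord_max ord_max)%:E
            | Delta in [set Delta : 'cV[R]_d | forall k, `|Delta k 0| <= eps]].

Definition adv_obj (lam eps : R) (d N : nat) (P Q : 'M[R]_(d.+1)) : \bar R :=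
  @Exp lam d N (@adv_loss eps d N P Q).

Definition in01 (n m : nat) (A : 'M[R]_(n, m)) : Prop :=
  forall i j, 0 <= A i j <= 1.

Definition Sval (lam eps : R) (d N : nat) (b : {ffun 'I_d.+1 -> bool}) : R :=
  \sum_(j < d.+1) \sum_(k < d)
     Num.max 0 (\sum_(i < d.+1) (b i)%:R * hcoef lam eps N i j k).

Definition Pstar (d : nat) (b : {ffun 'I_d.+1 -> bool}) : 'M[R]_(d.+1) :=
  \matrix_(i, j) (if i == ord_max then (b j)%:R else 0).

Definition Qstar (lam eps : R) (d N : nat) (b : {ffun 'I_d.+1 -> bool}) :
  'M[R]_(d.+1) :=
  \matrix_(j, k')
    match unlift ord_max k' with
    | Some k => ((0 <= \sum_(i < d.+1) (b i)%:R * hcoef lam eps N i j k)%R : bool)%:R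
    | None => 0
    end.

End Defs.

From mathcomp Require Import all_boot all_order all_algebra.
From mathcomp Require Import all_classical all_reals all_analysis.
From mathcomp Require Import ring lra.
Import Order.TTheory GRing.Theory Num.Theory numFieldNormedType.Exports.
Local Open Scope ring_scope.
Local Open Scope classical_set_scope.
Set Implicit Arguments. Unset Strict Implicit. Unset Printing Implicit Defensive.

(* On the support of the training distribution every feature has the sign of
   its label, so G = Z M Z^T / N is entrywise nonnegative; for P, Q in [0,1]
   the query weights (P G Q)_{d+1,k} are then nonnegative and the adversary
   always plays Delta = -y eps 1.  The loss becomes linear in the data, and
   the objective equals minus the bilinear form
   sum_{i,j,k} P_{d+1,i} Q_{j,k} h_{i,j,k}.  For fixed P it is maximised by
   the 0/1 matrix Q selecting the nonnegative coefficients, which gives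
   S(p) = sum_{j,k} max(0, sum_i p_i h_{i,j,k}) with p the last row of P;
   S is convex in each coordinate, so its maximum over [0,1]^{d+1} is
   attained at a vertex.  Since the expectation is an iterated Lebesgue
   integral, its linearity is obtained by evaluating it in closed form on
   polynomials in the features. *)

Section Moments.
Context {R : realType}.
Variable lam : R.

Definition unif_support (b : bool) : set R :=
  if b then [set t : R | (0 <= t <= lam)%R] else [set t : R | (- lam <= t <= 0)%R].

Lemma unif_supportE b :
  unif_support b = (if b then `[0, lam] else `[- lam, 0])%classic.
Proof. by case: b; apply/seteqP; split => x /=; rewrite in_itv. Qed.

Lemma measurable_unif_support b : measurable (unif_support b).
Proof. by rewrite unif_supportE; case: b; exact: measurable_itv. Qed.

Lemma integrable_unif_support (f : R -> R) b : continuous f ->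
  (@lebesgue_measure R).-integrable (unif_support b) (EFin \o f).
Proof.
move=> cf; rewrite unif_supportE; case: b; apply: continuous_compact_integrable;
  by [exact: segment_compact | exact: continuous_subspaceT].
Qed.

Definition moment b n : R :=
  fine (\int[@lebesgue_measure R]_(t in unif_support b) (t ^+ n)%:E).

Lemma integral_poly_unif_support b (A : finType) (K : A -> R) (e : A -> nat) :
  (\int[@lebesgue_measure R]_(t in unif_support b) (\sum_a K a * t ^+ e a)%:E
   = (\sum_a K a * moment b (e a))%:E)%E.
Proof.
have mD := measurable_unif_support b.
have intK a : (@lebesgue_measure R).-integrable (unif_support b)
    (fun t => (K a * t ^+ e a)%:E).
  have -> : (fun t => (K a * t ^+ e a)%:E) = (fun t => (K a)%:E * (t ^+ e a)%:E)%E.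
    by apply: funext => t; rewrite EFinM.
  exact/integrableZl/integrable_unif_support/exprn_continuous.
under eq_integral do rewrite -sumEFin.
rewrite integral_sum // -sumEFin; apply: eq_bigr => a _.
under eq_integral do rewrite EFinM.
have intE := integrable_unif_support b (@exprn_continuous _ (e a)).
rewrite integralZl // /moment EFinM fineK //; exact: integrable_fin_num.
Qed.

End Moments.

Section IteratedMoments.
Context {R : realType}.
Variables (I : finType) (J : I -> (R -> \bar R) -> \bar R) (m : I -> nat -> R).

Hypothesis J_poly : forall i (A : finType) (K : A -> R) (e : A -> nat),
  J i (fun t => (\sum_a K a * t ^+ e a)%:E) = (\sum_a K a * m i (e a))%:E.

(* Variable [i] is either frozen at the value [o i = Some t], or integrated
   out if it occurs in [s], or left at the default value 0 of [iint]. *)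
Definition iint_moment (s : seq I) (o : I -> option R) (i : I) (n : nat) : R :=
  if o i is Some t then t ^+ n else if i \in s then m i n else 0 ^+ n.

Lemma iint_poly (A : finType) (w : A -> R) (e : A -> I -> nat) (s : seq I)
    (o : I -> option R) :
  uniq s -> (forall i, i \in s -> o i = None) ->
  iint J s (fun g => (\sum_a w a * \prod_i (odflt (g i) (o i)) ^+ e a i)%:E) =
  (\sum_a w a * \prod_i iint_moment s o i (e a i))%:E.
Proof.
elim: s o => [|i s IH] o.
  move=> _ _ /=; congr (_%:E); apply: eq_bigr => a _; congr (_ * _).
  by apply: eq_bigr => p _; rewrite /iint_moment; case: (o p).
move=> /= /andP[iNs us] os.
have oi : o i = None by apply: os; rewrite inE eqxx.
pose Ra a := \prod_(p | p != i) iint_moment (i :: s) o p (e a p).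
transitivity (J i (fun t => (\sum_a (w a * Ra a) * t ^+ e a i)%:E)); last first.
  rewrite J_poly; congr (_%:E); apply: eq_bigr => a _.
  rewrite [in RHS](bigD1 i) //= /iint_moment oi inE eqxx /= /Ra /iint_moment; ring.
congr (J i _); apply: funext => t.
pose o' p := if p == i then Some t else o p.
have -> : (fun g : I -> R => (\sum_a w a * \prod_p
    odflt ((fun j => if j == i then t else g j) p) (o p) ^+ e a p)%:E)
   = (fun g => (\sum_a w a * \prod_p odflt (g p) (o' p) ^+ e a p)%:E).
  apply: funext => g; congr (_%:E); apply: eq_bigr => a _; congr (_ * _).
  by apply: eq_bigr => p _; rewrite /o'; case: eqP => [->|//]; rewrite oi.
rewrite IH //; last first.
  move=> p ps; rewrite /o'; case: eqP => [pi|_]; last by apply: os; rewrite inE ps orbT.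
  by rewrite -pi ps in iNs.
congr (_%:E); apply: eq_bigr => a _.
rewrite (bigD1 i) //= {1}/iint_moment /o' eqxx -mulrA; congr (_ * _).
rewrite mulrC; congr (_ * _); apply: eq_bigr => p pi.
by rewrite /iint_moment (negbTE pi) inE (negbTE pi).
Qed.

End IteratedMoments.

Lemma eq_iint {R : realType} (I : eqType) (J : I -> (R -> \bar R) -> \bar R)
    (D : I -> set R) :
  (forall i f f', {in D i, f =1 f'} -> J i f = J i f') ->
  forall s F F', (forall g, (forall i, i \in s -> D i (g i)) -> F g = F' g) ->
  iint J s F = iint J s F'.
Proof.
move=> eqJ; elim=> [|i s IH] F F' eqF /=; first exact: eqF.
apply: eqJ => t; rewrite inE => Dt; apply: IH => g Dg; apply: eqF => p.
by rewrite inE; case: (eqVneq p i) => [->|pi] //=; exact: Dg.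
Qed.

Section Expectation.
Context {R : realType}.
Variable lam : R.

Definition coord_moment d (c i : 'I_d) (y : bool) (n : nat) : R :=
  if i == c then sgn y ^+ n else lam^-1 * moment lam y n.

Lemma coord_exp_poly d (c i : 'I_d) y (A : finType) (K : A -> R) (e : A -> nat) :
  coord_exp lam c i y (fun t => (\sum_a K a * t ^+ e a)%:E)
  = (\sum_a K a * coord_moment c i y (e a))%:E.
Proof.
rewrite /coord_exp /coord_moment; case: eqP => _ //.
have := integral_poly_unif_support lam y K e; rewrite /unif_support => ->.
rewrite -EFinM mulr_sumr; congr (_%:E); apply: eq_bigr => a _; ring.
Qed.

Definition Exp_monomial d N (w : ('I_N.+1 -> R) -> R) (e : 'I_N.+1 * 'I_d -> nat) : R :=
  \sum_(c < d) (d%:R)^-1 * \sum_(y : {ffun 'I_N.+1 -> bool})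
     (2%:R ^- N.+1 * (w (fun n => sgn (y n)) *
        \prod_(p : 'I_N.+1 * 'I_d) coord_moment c p.2 (y p.1) (e p))).

Lemma Exp_monomialZ d N (k : R) w (e : 'I_N.+1 * 'I_d -> nat) :
  Exp_monomial (fun Y => k * w Y) e = k * Exp_monomial w e.
Proof.
rewrite /Exp_monomial mulr_sumr; apply: eq_bigr => c _.
rewrite mulrCA; congr (_ * _); rewrite mulr_sumr; apply: eq_bigr => y _.
by rewrite !mulrA [k * _]mulrC.
Qed.

Lemma Exp_poly d N (A : finType) (w : A -> ('I_N.+1 -> R) -> R)
    (e : A -> 'I_N.+1 * 'I_d -> nat) :
  Exp lam (fun (Y : 'I_N.+1 -> R) (X : 'M[R]_(N.+1, d)) =>
    (\sum_a w a Y * \prod_(p : 'I_N.+1 * 'I_d) X p.1 p.2 ^+ e a p)%:E)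
  = (\sum_a Exp_monomial (w a) (e a))%:E.
Proof.
rewrite /Exp /Exp_monomial.
transitivity (\sum_(c < d) ((d%:R)^-1)%:E * \sum_(y : {ffun 'I_N.+1 -> bool})
   ((2%:R ^- N.+1)%:E * (\sum_a w a (fun n => sgn (y n)) *
     \prod_(p : 'I_N.+1 * 'I_d) coord_moment c p.2 (y p.1) (e a p))%:E))%E.
  apply: eq_bigr => c _; congr (_ * _)%E; apply: eq_bigr => y _; congr (_ * _)%E.
  transitivity (iint (fun p : 'I_N.+1 * 'I_d => coord_exp lam c p.2 (y p.1))
     (enum {: 'I_N.+1 * 'I_d})
     (fun g => (\sum_a w a (fun n => sgn (y n)) *
         \prod_p odflt (g p) ((fun _ => None) p) ^+ e a p)%:E)).
    congr (iint _ _ _); apply: funext => g; congr (_%:E); apply: eq_bigr => a _.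
    by congr (_ * _); apply: eq_bigr => -[n k] _; rewrite mxE.
  rewrite (@iint_poly _ _ _ (fun p n => coord_moment c p.2 (y p.1) n)).
  - congr (_%:E); apply: eq_bigr => a _; congr (_ * _); apply: eq_bigr => p _.
    by rewrite /iint_moment mem_enum.
  - by move=> p B K e'; exact: coord_exp_poly.
  - exact: enum_uniq.
  - by [].
under eq_bigr do under eq_bigr do rewrite -EFinM.
under eq_bigr do rewrite sumEFin -EFinM.
rewrite sumEFin; congr (_%:E).
rewrite exchange_big /=; apply: eq_bigr => c _.
rewrite -[in RHS]mulr_sumr; congr (_ * _).
rewrite exchange_big /=; apply: eq_bigr => y _.
by rewrite -[in RHS]mulr_sumr.
Qed.

Definition supported N d (Y : 'I_N.+1 -> R) (X : 'M[R]_(N.+1, d)) :=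
  (forall n, Y n = 1 \/ Y n = -1) /\ (forall n k, 0 <= Y n * X n k).

Definition coord_support d (c i : 'I_d) (y : bool) : set R :=
  if i == c then [set sgn y] else unif_support lam y.

Lemma eq_coord_exp d (c i : 'I_d) y f f' :
  {in coord_support c i y, f =1 f'} -> coord_exp lam c i y f = coord_exp lam c i y f'.
Proof.
rewrite /coord_exp /coord_support; case: eqP => _ eqf.
  by apply: eqf; rewrite inE.
by congr (_ * _)%E; apply: eq_integral.
Qed.

Lemma eq_Exp d N F F' :
  (forall (Y : 'I_N.+1 -> R) (X : 'M[R]_(N.+1, d)), supported Y X -> F Y X = F' Y X) ->
  Exp lam F = Exp lam F'.
Proof.
move=> eqF; rewrite /Exp; apply: eq_bigr => c _; congr (_ * _)%E.
apply: eq_bigr => y _; congr (_ * _)%E.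
apply: (@eq_iint _ _ _ (fun p => coord_support c p.2 (y p.1))).
  by move=> p f f'; exact: eq_coord_exp.
move=> g supp_g; apply: eqF; split.
  by move=> n; rewrite /sgn; case: (y n); [left|right].
move=> n k; rewrite mxE.
have := supp_g (n, k) (mem_enum _ _); rewrite /coord_support /=; case: eqP => _.
  by move=> ->; rewrite /sgn; case: (y n); rewrite ?mulr1 ?mulrNN ?mulr1.
rewrite /unif_support /sgn; case: (y n) => /= /andP[h1 h2]; first by rewrite mul1r.
by rewrite mulN1r oppr_ge0.
Qed.

End Expectation.

Section Transformer.
Context {R : realType}.
Variables (d N : nat).
Implicit Types (Y : 'I_N.+1 -> R) (X : 'M[R]_(N.+1, d)) (Delta : 'cV[R]_d).

Lemma mulmx_Mmask Y X Delta i n :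
  (Zmat Y X Delta *m Mmask N) i n = if n == ord_max then 0 else Zmat Y X 0 i n.
Proof.
rewrite mxE (bigD1 n) //= big1 => [|n' nn']; last by rewrite !mxE (negbTE nn') mulr0.
rewrite !mxE eqxx /= addr0; case: eqVneq => [->|nq]; first by rewrite mulr0.
by rewrite mulr1.
Qed.

Lemma Zmat_Mmask Y X Delta : Zmat Y X Delta *m Mmask N = Zmat Y X 0 *m Mmask N.
Proof. by apply/matrixP => i n; rewrite !mulmx_Mmask. Qed.

Lemma trmx_Mmask : (Mmask N)^T = Mmask N :> 'M[R]_N.+1.
Proof. by apply/matrixP => i j; rewrite !mxE; case: eqVneq => [->|]. Qed.

Lemma Mmask_trZmat Y X Delta : Mmask N *m (Zmat Y X Delta)^T = Mmask N *m (Zmat Y X 0)^T.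
Proof. by rewrite -[Mmask N]trmx_Mmask -!trmx_mul Zmat_Mmask. Qed.

Lemma fTF_query (P Q : 'M[R]_d.+1) Y X Delta :
  fTF P Q (Zmat Y X Delta) ord_max ord_max =
  \sum_(k < d) (P *m Gmat Y X *m Q) ord_max (lift ord_max k) * (X ord_max k + Delta k 0).
Proof.
rewrite /fTF.
have -> : P *m Zmat Y X Delta *m Mmask N *m (Zmat Y X Delta)^T
          = P *m (Zmat Y X 0 *m Mmask N *m (Zmat Y X 0)^T).
  by rewrite -[P *m _ *m Mmask N]mulmxA Zmat_Mmask -!mulmxA Mmask_trZmat.
rewrite /Gmat mxE mxE (bigD1_ord ord_max) //=.
rewrite [Zmat _ _ _ ord_max ord_max]mxE unlift_none eqxx mulr0 add0r.
rewrite mulr_sumr; apply: eq_bigr => k _.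
rewrite [Zmat _ _ _ _ ord_max]mxE liftK eqxx -scalemxAr scalemxAl -!scalemxAl.
by rewrite [in RHS]mxE mulrA.
Qed.

Lemma supported_Zmat Y X i n : supported Y X -> 0 <= Y n * Zmat Y X 0 i n.
Proof.
move=> [HY HX]; rewrite mxE; case: unlift => [k|].
  by rewrite mxE; case: eqP => _; rewrite addr0.
case: eqP => _; first by rewrite mulr0.
by case: (HY n) => ->; rewrite ?mulr1 ?mulrNN ?mulr1.
Qed.

Lemma Gmat_ge0 Y X i j : supported Y X -> 0 <= Gmat Y X i j.
Proof.
move=> supp; rewrite /Gmat mxE; apply: mulr_ge0; first by rewrite invr_ge0.
rewrite mxE; apply: sumr_ge0 => n _; rewrite mulmx_Mmask.
have -> : (Zmat Y X 0)^T n j = Zmat Y X 0 j n by rewrite mxE.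
case: eqP => _; first by rewrite mul0r.
have Y2 : Y n * Y n = 1.
  by case: supp => HY _; case: (HY n) => ->; rewrite ?mulr1 ?mulrNN ?mulr1.
move: (supported_Zmat i n supp) (supported_Zmat j n supp).
move: (Zmat Y X 0 i n) (Zmat Y X 0 j n) => a b ha hb.
by rewrite -[a * b]mul1r -Y2 mulrACA; exact: mulr_ge0.
Qed.

Lemma PGQ_ge0 (P Q : 'M[R]_d.+1) Y X a b : in01 P -> in01 Q -> supported Y X ->
  0 <= (P *m Gmat Y X *m Q) a b.
Proof.
move=> HP HQ supp; rewrite mxE; apply: sumr_ge0 => j _.
apply: mulr_ge0; last by case/andP: (HQ j b).
rewrite mxE; apply: sumr_ge0 => i _; apply: mulr_ge0; last exact: Gmat_ge0.
by case/andP: (HP a i).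
Qed.

Lemma adv_loss_linear (eps : R) (P Q : 'M[R]_d.+1) Y X :
  0 <= eps -> in01 P -> in01 Q -> supported Y X ->
  adv_loss eps P Q Y X = (- \sum_(k < d) (P *m Gmat Y X *m Q) ord_max (lift ord_max k)
      * (Y ord_max * X ord_max k - eps))%:E.
Proof.
move=> e0 HP HQ supp.
have W0 k : 0 <= (P *m Gmat Y X *m Q) ord_max (lift ord_max k) by apply: PGQ_ge0.
have Yq : Y ord_max = 1 \/ Y ord_max = -1 by case: supp.
apply/le_anti/andP; split.
- apply: ge_ereal_sup => _ [Delta HD <-]; rewrite lee_fin fTF_query.
  rewrite mulr_sumr -sumrN; apply: ler_sum => k _.
  have := HD k; rewrite ler_norml => /andP[h1 h2].
  have := W0 k; move: (X ord_max k) (Delta k 0) h1 h2 => x t h1 h2 w0.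
  move: ((P *m Gmat Y X *m Q) ord_max (lift ord_max k)) w0 => w w0.
  by case: Yq => ->; nra.
- apply: ereal_sup_ubound; exists (\col_k (- Y ord_max * eps)).
    move=> k; rewrite mxE normrM normrN.
    by case: Yq => ->; rewrite ?normrN normr1 mul1r ger0_norm.
  congr (_%:E); rewrite fTF_query mulr_sumr -sumrN; apply: eq_bigr => k _.
  by rewrite !mxE; case: Yq => ->; ring.
Qed.

Definition Zmat_coef (i : 'I_d.+1) (n : 'I_N.+1) Y : R :=
  if unlift ord_max i is Some _ then 1 else Y n.
Definition Zmat_exp (i : 'I_d.+1) (n : 'I_N.+1) (p : 'I_N.+1 * 'I_d) : nat :=
  if unlift ord_max i is Some k then (p == (n, k)) else 0%N.

Lemma prod_expr_eq X (q : 'I_N.+1 * 'I_d) :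
  \prod_(p : 'I_N.+1 * 'I_d) X p.1 p.2 ^+ (p == q) = X q.1 q.2.
Proof.
rewrite (bigD1 q) //= eqxx expr1 big1 ?mulr1 // => p pq.
by rewrite (negbTE pq) expr0.
Qed.

Lemma Zmat_monomial Y X i n : n != ord_max ->
  Zmat Y X 0 i n = Zmat_coef i n Y * \prod_(p : 'I_N.+1 * 'I_d) X p.1 p.2 ^+ Zmat_exp i n p.
Proof.
move=> nq; rewrite mxE /Zmat_coef /Zmat_exp; case: unlift => [k|].
  by rewrite prod_expr_eq mxE mul1r (negbTE nq) addr0.
by rewrite (negbTE nq) big1 ?mulr1 // => p _; rewrite expr0.
Qed.

(* Monomial expansion of [G i j * (y x_k - eps)]: one term per context sample
   [n] and per summand ([true] for [y x_k], [false] for [- eps]). *)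
Definition h_weight (eps : R) (i j : 'I_d.+1) (a : 'I_N.+1 * bool) Y : R :=
  (N%:R)^-1 * (a.1 != ord_max)%:R * Zmat_coef i a.1 Y * Zmat_coef j a.1 Y *
  (if a.2 then Y ord_max else - eps).
Definition h_exp (i j : 'I_d.+1) (k : 'I_d) (a : 'I_N.+1 * bool) (p : 'I_N.+1 * 'I_d) : nat :=
  Zmat_exp i a.1 p + Zmat_exp j a.1 p + (if a.2 then (p == (ord_max, k)) : nat else 0).

Lemma h_integrand_poly (eps : R) Y X i j k :
  Gmat Y X i j * (Y ord_max * X ord_max k - eps) =
  \sum_(a : 'I_N.+1 * bool) h_weight eps i j a Y *
     \prod_(p : 'I_N.+1 * 'I_d) X p.1 p.2 ^+ h_exp i j k a p.
Proof.
transitivity (\sum_(n : 'I_N.+1) \sum_(b : bool) h_weight eps i j (n, b) Y *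
     \prod_(p : 'I_N.+1 * 'I_d) X p.1 p.2 ^+ h_exp i j k (n, b) p); last first.
  by rewrite pair_bigA; apply: eq_bigr => -[n b].
rewrite /Gmat mxE mxE mulr_sumr mulr_suml; apply: eq_bigr => n _.
rewrite big_bool /= mulmx_Mmask /h_weight /=.
case: eqVneq => [->|nq]; first by rewrite !mulr0 !mul0r mulr0 !mul0r addr0.
rewrite mulr1 [(Zmat Y X 0)^T _ _]mxE (Zmat_monomial _ _ i nq) (Zmat_monomial _ _ j nq).
have -> : \prod_p X p.1 p.2 ^+ h_exp i j k (n, true) p =
    \prod_p X p.1 p.2 ^+ Zmat_exp i n p * \prod_p X p.1 p.2 ^+ Zmat_exp j n p * X ord_max k.
  by rewrite /h_exp /=; under eq_bigr do rewrite !exprD; rewrite !big_split /= prod_expr_eq.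
have -> : \prod_p X p.1 p.2 ^+ h_exp i j k (n, false) p =
    \prod_p X p.1 p.2 ^+ Zmat_exp i n p * \prod_p X p.1 p.2 ^+ Zmat_exp j n p.
  by rewrite /h_exp /=; under eq_bigr do rewrite addn0 !exprD; rewrite !big_split.
ring.
Qed.

Lemma hcoef_poly (lam eps : R) i j k :
  hcoef lam eps N i j k = \sum_a Exp_monomial lam (h_weight eps i j a) (h_exp i j k a).
Proof.
rewrite /hcoef.
have -> : (fun (Y : 'I_N.+1 -> R) (X : 'M[R]_(N.+1, d)) =>
     (Gmat Y X i j * (Y ord_max * X ord_max k - eps))%:E) =
   (fun Y X => (\sum_(a : 'I_N.+1 * bool) h_weight eps i j a Y *
     \prod_(p : 'I_N.+1 * 'I_d) X p.1 p.2 ^+ h_exp i j k a p)%:E).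
  by apply: funext => Y; apply: funext => X; rewrite h_integrand_poly.
by rewrite (Exp_poly lam (fun a => h_weight eps i j a) (fun a => h_exp i j k a)).
Qed.

Lemma adv_loss_expand (eps : R) (P Q : 'M[R]_d.+1) Y X :
  0 <= eps -> in01 P -> in01 Q -> supported Y X ->
  adv_loss eps P Q Y X = (\sum_(k < d) \sum_(j < d.+1) \sum_(i < d.+1)
    - (P ord_max i * Q j (lift ord_max k)) *
      (Gmat Y X i j * (Y ord_max * X ord_max k - eps)))%:E.
Proof.
move=> e0 HP HQ supp; rewrite adv_loss_linear // -sumrN; congr (_%:E).
apply: eq_bigr => k _; rewrite mxE mulr_suml -sumrN; apply: eq_bigr => j _.
rewrite mxE !mulr_suml -sumrN; apply: eq_bigr => i _; ring.
Qed.

Definition adv_bilinear (lam eps : R) (P Q : 'M[R]_d.+1) : R :=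
  \sum_(k < d) \sum_(j < d.+1) \sum_(i < d.+1)
     P ord_max i * Q j (lift ord_max k) * hcoef lam eps N i j k.

Lemma adv_objE (lam eps : R) (P Q : 'M[R]_d.+1) :
  0 <= eps -> in01 P -> in01 Q ->
  adv_obj lam eps N P Q = (- adv_bilinear lam eps P Q)%:E.
Proof.
move=> e0 HP HQ.
pose c (u : 'I_d * 'I_d.+1 * 'I_d.+1) := - (P ord_max u.2 * Q u.1.2 (lift ord_max u.1.1)).
rewrite /adv_obj (@eq_Exp _ lam d N _ (fun Y X =>
   (\sum_(u : 'I_d * 'I_d.+1 * 'I_d.+1 * ('I_N.+1 * bool))
      (c u.1 * h_weight eps u.1.2 u.1.1.2 u.2 Y) *
      \prod_(p : 'I_N.+1 * 'I_d) X p.1 p.2 ^+ h_exp u.1.2 u.1.1.2 u.1.1.1 u.2 p)%:E)).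
  rewrite (Exp_poly lam (fun u Y => c u.1 * h_weight eps u.1.2 u.1.1.2 u.2 Y)
                        (fun u => h_exp u.1.2 u.1.1.2 u.1.1.1 u.2)).
  congr (_%:E); rewrite /adv_bilinear -sumrN; symmetry.
  under eq_bigr do rewrite -sumrN; under eq_bigr do under eq_bigr do rewrite -sumrN.
  under eq_bigr do under eq_bigr do under eq_bigr do rewrite hcoef_poly mulr_sumr -sumrN.
  rewrite [LHS]pair_bigA [LHS]pair_bigA [LHS]pair_bigA.
  by apply: eq_bigr => -[[[k j] i] a] _; rewrite Exp_monomialZ /c mulNr.
move=> Y X supp; rewrite adv_loss_expand //; congr (_%:E).
under eq_bigr do under eq_bigr do under eq_bigr do rewrite h_integrand_poly mulr_sumr.
rewrite [LHS]pair_bigA [LHS]pair_bigA [LHS]pair_bigA.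
by apply: eq_bigr => -[[[k j] i] a] _; rewrite /c mulrA.
Qed.

End Transformer.

Section VertexMaximum.
Variables (R : realFieldType) (n m : nat) (h : 'I_n -> 'I_n -> 'I_m -> R).

Definition Srelax (p : 'I_n -> R) : R :=
  \sum_(j < n) \sum_(k < m) Num.max 0 (\sum_(i < n) p i * h i j k).

Definition setc (p : 'I_n -> R) i (v : R) l := if l == i then v else p l.

Lemma sum_mul_setc (p g : 'I_n -> R) i :
  \sum_l p l * g l =
  (1 - p i) * \sum_l setc p i 0 l * g l + p i * \sum_l setc p i 1 l * g l.
Proof.
have sumD1 (q : 'I_n -> R) : \sum_l q l * g l = q i * g i + \sum_(l | l != i) q l * g l.
  by rewrite (bigD1 i).
have sum_setc v : \sum_(l | l != i) setc p i v l * g l = \sum_(l | l != i) p l * g l.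
  by apply: eq_bigr => l li; rewrite /setc (negbTE li).
rewrite !sumD1 !sum_setc /setc eqxx; ring.
Qed.

Lemma max0_convex (t x y : R) : 0 <= t <= 1 ->
  Num.max 0 ((1 - t) * x + t * y) <= (1 - t) * Num.max 0 x + t * Num.max 0 y.
Proof.
move=> /andP[t0 t1]; have t1' : 0 <= 1 - t by rewrite subr_ge0.
rewrite ge_max; apply/andP; split.
  by apply: addr_ge0; apply: mulr_ge0; rewrite // le_max lexx.
by apply: lerD; apply: ler_wpM2l; rewrite // le_max lexx orbT.
Qed.

Lemma Srelax_le_setc (p : 'I_n -> R) i : 0 <= p i <= 1 ->
  Srelax p <= Num.max (Srelax (setc p i 0)) (Srelax (setc p i 1)).
Proof.
move=> p01; apply: (@le_trans _ _ ((1 - p i) * Srelax (setc p i 0) + p i * Srelax (setc p i 1))).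
  rewrite /Srelax !mulr_sumr -big_split /=; apply: ler_sum => j _.
  rewrite !mulr_sumr -big_split /=; apply: ler_sum => k _.
  by rewrite (sum_mul_setc _ (fun l => h l j k) i); exact: max0_convex.
case/andP: p01 => p0 p1; have p1' : 0 <= 1 - p i by rewrite subr_ge0.
set M := Num.max _ _; have -> : M = (1 - p i) * M + p i * M by rewrite -mulrDl subrK mul1r.
by apply: lerD; apply: ler_wpM2l; rewrite // le_max lexx ?orbT.
Qed.

Lemma Srelax_vertex (p : 'I_n -> R) : (forall i, 0 <= p i <= 1) ->
  exists b : {ffun 'I_n -> bool}, Srelax p <= Srelax (fun i => (b i)%:R).
Proof.
suff : forall s : seq 'I_n, forall p : 'I_n -> R, (forall i, 0 <= p i <= 1) ->
    (forall i, i \notin s -> p i = 0 \/ p i = 1) ->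
    exists b : {ffun 'I_n -> bool}, Srelax p <= Srelax (fun i => (b i)%:R).
  by move=> /(_ (enum 'I_n) p) vertex p01; apply: vertex => // i; rewrite mem_enum.
elim=> [|i s IH] {}p p01 pbin.
  exists [ffun i => p i == 1]; rewrite le_eqVlt; apply/orP; left; apply/eqP.
  rewrite /Srelax; apply: eq_bigr => j _; apply: eq_bigr => k _.
  congr (Num.max 0 _); apply: eq_bigr => l _; rewrite ffunE; congr (_ * _).
  by case: (pbin l (negbT (in_nil l))) => ->; rewrite ?eqxx // eq_sym oner_eq0.
have setc01 v l : v = 0 \/ v = 1 -> 0 <= setc p i v l <= 1.
  by rewrite /setc; case: eqP => _ // [] ->; rewrite ?lexx ?ler01.
have setc_bin v l : v = 0 \/ v = 1 -> l \notin s -> setc p i v l = 0 \/ setc p i v l = 1.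
  move=> v01 ls; rewrite /setc; case: eqP => [_|li] //; apply: pbin.
  by rewrite inE negb_or ls andbT; apply/eqP.
have [b0 H0] := IH _ (setc01 0 ^~ (or_introl erefl)) (setc_bin 0 ^~ (or_introl erefl)).
have [b1 H1] := IH _ (setc01 1 ^~ (or_intror erefl)) (setc_bin 1 ^~ (or_intror erefl)).
have := Srelax_le_setc (p01 i); rewrite le_max => /orP[] H.
  by exists b0; apply: le_trans H H0.
by exists b1; apply: le_trans H H1.
Qed.

End VertexMaximum.

Section Optimum.
Context {R : realType}.
Variables (d N : nat) (lam eps : R).

Let h (i j : 'I_d.+1) (k : 'I_d) := hcoef lam eps N i j k.

Lemma adv_bilinear_le_Srelax (P Q : 'M[R]_d.+1) : in01 P -> in01 Q ->
  adv_bilinear N lam eps P Q <= Srelax h (fun i => P ord_max i).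
Proof.
move=> HP HQ; rewrite /adv_bilinear /Srelax exchange_big /=; apply: ler_sum => j _.
apply: ler_sum => k _.
rewrite (eq_bigr (fun i => Q j (lift ord_max k) * (P ord_max i * h i j k))); last first.
  by move=> i _; rewrite mulrCA mulrA.
rewrite -mulr_sumr; move: (\sum_(i < d.+1) _) => x; have /andP[q0 q1] := HQ j (lift ord_max k).
have [x0|x0] := leP 0 x; first by rewrite -[leRHS]mul1r ler_wpM2r.
by rewrite mulr_ge0_le0 // ltW.
Qed.

Lemma adv_bilinear_star (b : {ffun 'I_d.+1 -> bool}) :
  adv_bilinear N lam eps (Pstar b) (Qstar lam eps N b) = Sval lam eps N b.
Proof.
rewrite /adv_bilinear /Sval exchange_big /=; apply: eq_bigr => j _; apply: eq_bigr => k _.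
rewrite (eq_bigr (fun i => ((0 <= \sum_(l < d.+1) (b l)%:R * h l j k)%R : bool)%:R *
    ((b i)%:R * h i j k))); last by move=> i _; rewrite !mxE eqxx liftK mulrCA mulrA.
by rewrite -mulr_sumr; move: (\sum_(i < d.+1) _) => x; case: leP; rewrite ?mul1r ?mul0r.
Qed.

End Optimum.

Lemma boolr_in01 (R : numDomainType) (c : bool) : (0 <= c%:R :> R) && (c%:R <= 1 :> R).
Proof. by case: c; rewrite ?lexx ?ler01. Qed.

Lemma in01_Pstar {R : realType} d (b : {ffun 'I_d.+1 -> bool}) :
  in01 (Pstar b : 'M[R]_d.+1).
Proof.
by move=> i j; rewrite mxE; case: eqP => _; [exact: boolr_in01 | rewrite lexx ler01].
Qed.

Lemma in01_Qstar {R : realType} d N (lam eps : R) (b : {ffun 'I_d.+1 -> bool}) :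
  in01 (Qstar lam eps N b).
Proof.
by move=> i j; rewrite mxE; case: unlift => [k|]; [exact: boolr_in01 | rewrite lexx ler01].
Qed.

Theorem lemma3p1 (R : realType) (d N : nat) (lam eps : R) :
  (0 < d)%N -> (0 < N)%N -> 0 < lam < 1 -> 0 <= eps ->
  let S := fun b : {ffun 'I_d.+1 -> bool} => Sval lam eps N b in
  let V := \big[Num.max/0]_(b : {ffun 'I_d.+1 -> bool}) S b in
  ((exists P Q : 'M[R]_d.+1,
      in01 P /\ in01 Q /\ adv_obj lam eps N P Q = (- V)%:E) /\
   (forall P Q : 'M[R]_d.+1, in01 P -> in01 Q ->
      ((- V)%:E <= adv_obj lam eps N P Q)%E)) /\
  (forall bstar : {ffun 'I_d.+1 -> bool},
     (forall b, S b <= S bstar) ->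
     in01 (Pstar bstar : 'M[R]_d.+1) /\ in01 (Qstar lam eps N bstar) /\
     (forall P Q : 'M[R]_d.+1, in01 P -> in01 Q ->
        (adv_obj lam eps N (Pstar bstar) (Qstar lam eps N bstar)
           <= adv_obj lam eps N P Q)%E)).
Proof.
move=> _ _ _ e0 S V.
have S_le_V b : S b <= V by exact: le_bigmax.
have V_opt bs : (forall b, S b <= S bs) -> V = S bs.
  move=> Sbs; apply/le_anti; rewrite S_le_V andbT.
  apply: bigmax_le => [|b _]; last exact: Sbs.
  by apply: sumr_ge0 => j _; apply: sumr_ge0 => k _; rewrite le_max lexx.
have lower (P Q : 'M[R]_d.+1) : in01 P -> in01 Q -> ((- V)%:E <= adv_obj lam eps N P Q)%E.
  move=> HP HQ; rewrite adv_objE // lee_fin lerN2.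
  have [b Sb] := Srelax_vertex (fun i j k => hcoef lam eps N i j k) (HP ord_max).
  apply: le_trans (adv_bilinear_le_Srelax N lam eps HP HQ) _.
  exact: le_trans Sb (S_le_V b).
have star_opt bs : (forall b, S b <= S bs) ->
    adv_obj lam eps N (Pstar bs) (Qstar lam eps N bs) = (- V)%:E.
  move=> Sbs; rewrite adv_objE ?adv_bilinear_star ?(V_opt bs Sbs) //.
    exact: in01_Pstar.
  exact: in01_Qstar.
have [bs _ Sbs] := @arg_maxP _ _ {ffun 'I_d.+1 -> bool} [ffun=> false] xpredT S isT.
split; first split.
- exists (Pstar bs), (Qstar lam eps N bs).
  split; first exact: in01_Pstar.
  by split; [exact: in01_Qstar | apply: star_opt => b; exact: Sbs].
- exact: lower.
move=> b Sb; split; first exact: in01_Pstar.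
split; first exact: in01_Qstar.
by move=> P Q HP HQ; rewrite star_opt //; exact: lower.
Qed.
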